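(* For fixed $0<q<1$, $p=1-q$, integers $r\ge1$ and $n\ge r$, \[ E^{(r)}_n=(-1)^r\Big(\frac pq\Big)^{r-1}\sum_{k=r}^n\binom nk(-1)^k\frac{\phi_r(k)}{(1-q^k)^2}, \] where, with $Q=1/q$, \[ \phi_r(k)=\sum_{0<l_1<\dots<l_{r-1}<k}\frac{1}{Q^{l_1}-1}\cdots\frac{1}{Q^{l_{r-1}}-1}\,\big(q^{l_{r-1}}-q^k\big), \] with the convention that for $r=1$ the sum consists of the single empty-index term with $l_0=0$, i.e. $\phi_1(k)=1-q^k$. In particular \[ E^{(1)}_n=\sum_{k=1}^n\binom nk(-1)^{k-1}\frac{1}{1-q^k}. \]
   Context: Words $a_1\dots a_n$ have independent letters with $\mathbb P\{a_i=k\}=pq^{k-1}$, $k\ge1$. An index $i$ is a left-to-right maximum if $a_i>a_j$ for all $j<i$. Left-to-right maxima are counted from the right (the last one is the 1st). $E^{(r)}_n=\mathbb E[V\cdot\mathbf 1\{\text{at least } r \text{ left-to-right maxima}\}]$ where $V$ is the value of the $r$th left-to-right maximum from the right. *)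

From HB Require Import structures.
From mathcomp Require Import all_boot all_order all_algebra.
From mathcomp Require Import all_classical all_reals all_analysis.
Set Implicit Arguments. Unset Strict Implicit. Unset Printing Implicit Defensive.
Import Order.TTheory GRing.Theory Num.Theory.
Local Open Scope ring_scope.

(* A word is a sequence of positive letters (seq nat). *)
Definition is_ltrmax (s : seq nat) (i : nat) : bool :=
  all (fun j => (nth 0 s j < nth 0 s i)%N) (iota 0 i).

Definition ltrmax_vals (s : seq nat) : seq nat :=
  [seq nth 0 s i | i <- iota 0 (size s) & is_ltrmax s i].

(* V * 1{at least r left-to-right maxima}, where V is the value of the r-th
   left-to-right maximum counted from the right (the last one is the 1st). *)
Definition Vr (r : nat) (s : seq nat) : nat :=
  if (r <= size (ltrmax_vals s))%N then nth 0 (rev (ltrmax_vals s)) r.-1 else 0%N.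

(* The word with letters f i + 1 (so letters range over 1..M). *)
Definition word_of (n M : nat) (f : {ffun 'I_n -> 'I_M}) : seq nat :=
  [seq (f i).+1 | i <- enum 'I_n].

(* Probability of that word: prod_i p q^(a_i - 1). *)
Definition word_prob (R : realType) (q : R) (n M : nat) (f : {ffun 'I_n -> 'I_M}) : R :=
  \prod_(i < n) ((1 - q) * q ^+ (f i)).

(* Truncated expectation: restricted to words with all letters <= M.
   Since the summand is nonnegative, E_n^{(r)} is the limit as M -> oo. *)
Definition Etrunc (R : realType) (q : R) (r n M : nat) : R :=
  \sum_(f : {ffun 'I_n -> 'I_M}) word_prob q f * (Vr r (word_of f))%:R.

(* phi_r(k) = sum over 0 < l_1 < ... < l_{r-1} < k of
   prod_j 1/(Q^{l_j} - 1) * (q^{l_{r-1}} - q^k), with Q = 1/q and l_0 = 0;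
   index sets are represented as subsets S of {1,...,k-1} with #|S| = r-1. *)
Definition phi (R : realType) (q : R) (r k : nat) : R :=
  \sum_(S : {set 'I_k} | (#|S| == r.-1)%N && ((0%N : nat) \notin [seq val l | l in S]))
     (\prod_(l in S) (1 / (q^-1 ^+ (val l) - 1))) *
     (q ^+ (\max_(l in S) val l) - q ^+ k).

From HB Require Import structures.
From mathcomp Require Import all_boot all_order all_algebra.
From mathcomp Require Import all_classical all_reals all_analysis.
From mathcomp Require Import ring.
Import Order.TTheory GRing.Theory Num.Theory.
Set Implicit Arguments. Unset Strict Implicit. Unset Printing Implicit Defensive.

(* Let K_n(r, s) ([genK]) be the expectation of V_r * s ^ (largest letter), with V_0 := 1, over
   words whose letters are at most M.  Appending a letter a to a word w with largest
   letter m either leaves V_r and m unchanged (a <= m) or makes a the last left-to-right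
   maximum, which turns V_r into V_(r-1) (and V_1 into a).  Summing the geometric weights
   of a gives recurrences expressing K_(n+1)(r, s) through K_n(r, s), K_n(r, q s) and
   K_n(r - 1, q s), up to tails that vanish as M -> oo.  Hence the limit of K_n(r, s) is a
   binomial transform sum_k C(n, k) (-1)^k kappa_r(k, s), where kappa_r obeys the same
   recurrence in k.  That recurrence is solved by the deformation phis_r(k, s) of phi_r(k)
   (splitting the index sets on their smallest element), and phis_r(k, 1) = phi_r(k). *)

Definition wmax (w : seq nat) : nat := \max_(x <- w) x.

Lemma wmax_cons x w : wmax (x :: w) = maxn x (wmax w).
Proof. by rewrite /wmax big_cons. Qed.

Lemma wmax_rcons w a : wmax (rcons w a) = maxn (wmax w) a.
Proof. by rewrite /wmax big_rcons. Qed.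

Lemma wmax_bounded M w : all (fun x => 0 < x <= M)%N w -> (wmax w <= M)%N.
Proof. by move=> bw; apply/bigmax_leqP_seq => x /(allP bw) /andP[]. Qed.

Lemma all_nth_ltn_wmax w a : (0 < a)%N ->
  all (fun j => nth 0 w j < a)%N (iota 0 (size w)) = (wmax w < a)%N.
Proof.
move=> a_gt0; rewrite -[all _ _](all_map (nth 0 w) (fun x => x < a)%N).
rewrite -/(mkseq _ _) mkseq_nth.
elim: w => [|x w IH] /=; first by rewrite /wmax big_nil a_gt0.
by rewrite IH wmax_cons gtn_max.
Qed.

Lemma ltrmax_vals_rcons w a : (0 < a)%N ->
  ltrmax_vals (rcons w a) =
  ltrmax_vals w ++ (if (wmax w < a)%N then [:: a] else [::]).
Proof.
move=> a_gt0; rewrite /ltrmax_vals size_rcons -addn1 iotaD filter_cat map_cat.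
congr (_ ++ _).
  rewrite (@eq_in_filter _ _ (is_ltrmax w)); last first.
    move=> i; rewrite mem_iota => /andP[_ lt_i]; apply: eq_in_all => j.
    by rewrite mem_iota => /andP[_ lt_j]; rewrite !nth_rcons lt_i (ltn_trans lt_j).
  apply/eq_in_map => i; rewrite mem_filter mem_iota => /and3P[_ _ lt_i].
  by rewrite nth_rcons lt_i.
rewrite /= /is_ltrmax nth_rcons ltnn eqxx -(all_nth_ltn_wmax w a_gt0).
rewrite (@eq_in_all _ _ (fun j => nth 0 w j < a)%N); last first.
  by move=> j; rewrite mem_iota => /andP[_ lt_j]; rewrite nth_rcons lt_j.
by case: ifP => //= _; rewrite nth_rcons ltnn eqxx.
Qed.

Section LastLetter.
Variables (w : seq nat) (a : nat).
Hypothesis a_gt0 : (0 < a)%N.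

Lemma Vr_rcons_leq r : (a <= wmax w)%N -> Vr r (rcons w a) = Vr r w.
Proof. by move=> le_a; rewrite /Vr ltrmax_vals_rcons // ltnNge le_a cats0. Qed.

Lemma Vr1_rcons_gt : (wmax w < a)%N -> Vr 1 (rcons w a) = a.
Proof. by move=> gt_a; rewrite /Vr ltrmax_vals_rcons // gt_a cats1 size_rcons rev_rcons. Qed.

Lemma VrSS_rcons_gt r : (wmax w < a)%N -> Vr r.+2 (rcons w a) = Vr r.+1 w.
Proof.
by move=> gt_a; rewrite /Vr ltrmax_vals_rcons // gt_a cats1 size_rcons rev_rcons /= ltnS.
Qed.

End LastLetter.

Lemma Vr1_wmax w : all (fun x => 0 < x)%N w -> Vr 1 w = wmax w.
Proof.
elim/last_ind: w => [|w a IH]; first by rewrite /Vr /ltrmax_vals /= /wmax big_nil.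
rewrite all_rcons wmax_rcons => /andP[a_gt0 /IH {}IH].
have [le_a|gt_a] := leqP a (wmax w).
  by rewrite Vr_rcons_leq // IH; apply/esym/maxn_idPl.
by rewrite Vr1_rcons_gt //; apply/esym/maxn_idPr/ltnW.
Qed.

Local Open Scope ring_scope.

Definition ffun_rcons n M (g : {ffun 'I_n -> 'I_M}) (a : 'I_M) : {ffun 'I_n.+1 -> 'I_M} :=
  [ffun i => if unlift ord_max i is Some j then g j else a].

Lemma ffun_rcons_lift n M (g : {ffun 'I_n -> 'I_M}) a i :
  ffun_rcons g a (widen_ord (leqnSn n) i) = g i.
Proof.
have -> : widen_ord (leqnSn n) i = lift ord_max i.
  by apply: val_inj; rewrite /= /bump leqNgt ltn_ord.
by rewrite ffunE liftK.
Qed.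

Lemma big_ffun_rcons (V : nmodType) n M (F : {ffun 'I_n.+1 -> 'I_M} -> V) :
  \sum_(f : {ffun 'I_n.+1 -> 'I_M}) F f =
  \sum_(g : {ffun 'I_n -> 'I_M}) \sum_(a < M) F (ffun_rcons g a).
Proof.
rewrite pair_big /= (reindex (fun p => ffun_rcons p.1 p.2)) //=.
exists (fun f => ([ffun j => f (lift ord_max j)], f ord_max)).
  move=> [g a] _ /=; congr pair; last by rewrite ffunE unlift_none.
  by apply/ffunP => j; rewrite !ffunE liftK.
move=> f _; apply/ffunP => i; rewrite ffunE.
by case: unliftP => [j ->|->]; rewrite ?ffunE.
Qed.

Lemma word_of_rcons n M (g : {ffun 'I_n -> 'I_M}) a :
  word_of (ffun_rcons g a) = rcons (word_of g) a.+1.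
Proof.
rewrite /word_of enum_ordSr map_rcons -map_comp ffunE unlift_none.
by congr rcons; apply: eq_map => i /=; rewrite ffun_rcons_lift.
Qed.

Lemma word_prob_rcons (R : realType) (q : R) n M (g : {ffun 'I_n -> 'I_M}) a :
  word_prob q (ffun_rcons g a) = word_prob q g * ((1 - q) * q ^+ a).
Proof.
rewrite /word_prob big_ord_recr ffunE unlift_none.
by congr (_ * _); apply: eq_bigr => i _; rewrite ffun_rcons_lift.
Qed.

Lemma word_of_bounded n M (g : {ffun 'I_n -> 'I_M}) :
  all (fun x => 0 < x <= M)%N (word_of g).
Proof. by rewrite /word_of all_map; apply/allP => i _ /=. Qed.

Section WordExpectation.
Variables (R : realType) (q : R).

Definition wexp n M (F : seq nat -> R) : R :=
  \sum_(f : {ffun 'I_n -> 'I_M}) word_prob q f * F (word_of f).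

Lemma wexp0 M F : wexp 0 M F = F [::].
Proof.
rewrite /wexp (big_pred1 (ffun0 (card_ord 0))); last first.
  by move=> f; apply/esym/eqP/ffunP => -[].
rewrite /word_prob big_ord0 mul1r; congr F.
by apply/size0nil; rewrite size_map size_enum_ord.
Qed.

Lemma wexpS n M F : wexp n.+1 M F =
  wexp n M (fun w => \sum_(a < M) (1 - q) * q ^+ a * F (rcons w a.+1)).
Proof.
rewrite /wexp big_ffun_rcons; apply: eq_bigr => g _; rewrite mulr_sumr.
by apply: eq_bigr => a _; rewrite word_of_rcons word_prob_rcons !mulrA.
Qed.

Lemma eq_wexp n M F G : (forall w, all (fun x => 0 < x <= M)%N w -> F w = G w) ->
  wexp n M F = wexp n M G.
Proof. by move=> eqFG; apply: eq_bigr => f _; rewrite eqFG ?word_of_bounded. Qed.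

Lemma wexpD n M F G : wexp n M (fun w => F w + G w) = wexp n M F + wexp n M G.
Proof. by rewrite -big_split; apply: eq_bigr => f _; rewrite mulrDr. Qed.

Lemma wexpB n M F G : wexp n M (fun w => F w - G w) = wexp n M F - wexp n M G.
Proof. by rewrite -sumrB; apply: eq_bigr => f _; rewrite mulrBr. Qed.

Lemma wexpZ n M c F : wexp n M (fun w => c * F w) = c * wexp n M F.
Proof. by rewrite mulr_sumr; apply: eq_bigr => f _; rewrite mulrCA. Qed.

End WordExpectation.

Section GeometricTails.
Variable F : fieldType.

Definition geom_tail (y : F) m := y ^+ m / (1 - y).
Definition dgeom_tail (y : F) m := y ^+ m / (1 - y) ^+ 2 + m%:R * y ^+ m / (1 - y).

Lemma sum_geom_tail (y : F) m M : y != 1 -> (m <= M)%N ->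
  \sum_(m <= a < M) y ^+ a = geom_tail y m - geom_tail y M.
Proof.
move=> y_neq1 le_mM; have y1 : 1 - y != 0 by rewrite subr_eq0 eq_sym.
rewrite (@telescope_sumr_eq _ _ _ (fun a => - geom_tail y a)) // 1?addrC ?opprK //.
by move=> a _; rewrite /geom_tail exprS; field.
Qed.

Lemma sum_dgeom_tail (y : F) m M : y != 1 -> (m <= M)%N ->
  \sum_(m <= a < M) a.+1%:R * y ^+ a = dgeom_tail y m - dgeom_tail y M.
Proof.
move=> y_neq1 le_mM; have y1 : 1 - y != 0 by rewrite subr_eq0 eq_sym.
rewrite (@telescope_sumr_eq _ _ _ (fun a => - dgeom_tail y a)) // 1?addrC ?opprK //.
by move=> a _; rewrite /dgeom_tail exprS -natr1; field.
Qed.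

End GeometricTails.

Section GeneratingFunction.
Variables (R : realType) (q : R).

(* The weight [vweight 0 = 1] makes [genK _ _ 0 s] the generating function of the largest letter. *)
Definition vweight r w : R := if r is 0 then 1 else (Vr r w)%:R.

Definition genK n M r (s : R) : R := wexp q n M (fun w => vweight r w * s ^+ wmax w).

Lemma vweight_rcons_leq r w a : (0 < a)%N -> (a <= wmax w)%N ->
  vweight r (rcons w a) = vweight r w.
Proof. by case: r => //= r a_gt0 le_a; rewrite Vr_rcons_leq. Qed.

Lemma sum_last_letter r s w M : all (fun x => 0 < x <= M)%N w ->
  \sum_(a < M) (1 - q) * q ^+ a * (vweight r (rcons w a.+1) * s ^+ wmax (rcons w a.+1)) =
  vweight r w * (s ^+ wmax w - (q * s) ^+ wmax w) +
  \sum_(wmax w <= a < M) (1 - q) * q ^+ a * s ^+ a.+1 * vweight r (rcons w a.+1).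
Proof.
move=> bw; have le_wM := wmax_bounded bw.
pose F a := (1 - q) * q ^+ a * (vweight r (rcons w a.+1) * s ^+ wmax (rcons w a.+1)).
rewrite -(big_mkord (fun _ => true) F) (big_cat_nat (leq0n _) le_wM) /= {}/F.
congr (_ + _).
  rewrite (@telescope_sumr_eq _ _ _ (fun a => - q ^+ a * (vweight r w * s ^+ wmax w))) //.
    by rewrite expr0 exprMn; ring.
  move=> a /andP[_ lt_am]; rewrite wmax_rcons (maxn_idPl lt_am).
  by rewrite vweight_rcons_leq // exprS; ring.
apply: eq_big_nat => a /andP[le_ma _].
by rewrite wmax_rcons (maxn_idPr (leqW le_ma)); ring.
Qed.

Section Recurrences.
Variables (n M : nat) (s : R).
Hypothesis qs_neq1 : q * s != 1.

Lemma genK_rec r r' :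
  (forall w a, (wmax w < a.+1)%N -> vweight r (rcons w a.+1) = vweight r' w) ->
  genK n.+1 M r s = genK n M r s - genK n M r (q * s) +
    (1 - q) * s / (1 - q * s) * (genK n M r' (q * s) - (q * s) ^+ M * genK n M r' 1).
Proof.
move=> new_max; have qs1 : 1 - q * s != 0 by rewrite subr_eq0 eq_sym.
rewrite /genK wexpS -!wexpZ -!wexpB -wexpZ -wexpD; apply: eq_wexp => w bw.
rewrite sum_last_letter //.
have tail : \sum_(wmax w <= a < M) (1 - q) * q ^+ a * s ^+ a.+1 * vweight r (rcons w a.+1)
    = (1 - q) * s * vweight r' w * \sum_(wmax w <= a < M) (q * s) ^+ a.
  rewrite mulr_sumr; apply: eq_big_nat => a /andP[le_a _].
  by rewrite new_max // exprS exprMn; ring.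
rewrite tail sum_geom_tail ?wmax_bounded // /geom_tail expr1n mulr1.
by field.
Qed.

Lemma genK_rec0 :
  genK n.+1 M 0 s = genK n M 0 s - genK n M 0 (q * s) +
    (1 - q) * s / (1 - q * s) * (genK n M 0 (q * s) - (q * s) ^+ M * genK n M 0 1).
Proof. exact: genK_rec. Qed.

Lemma genK_recSS r :
  genK n.+1 M r.+2 s = genK n M r.+2 s - genK n M r.+2 (q * s) +
    (1 - q) * s / (1 - q * s) * (genK n M r.+1 (q * s) - (q * s) ^+ M * genK n M r.+1 1).
Proof. by apply: genK_rec => w a gt_a; rewrite /= VrSS_rcons_gt. Qed.

Lemma genK_rec1 :
  genK n.+1 M 1 s = genK n M 1 s - genK n M 1 (q * s) +
    (1 - q) * s * ((1 - q * s) ^- 2 * genK n M 0 (q * s) +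
      (1 - q * s)^-1 * genK n M 1 (q * s) - dgeom_tail (q * s) M * genK n M 0 1).
Proof.
have qs1 : 1 - q * s != 0 by rewrite subr_eq0 eq_sym.
rewrite /genK wexpS -!wexpZ -!wexpB -wexpD -wexpB -wexpZ -wexpD.
apply: eq_wexp => w bw; rewrite sum_last_letter //.
have w_pos : all (fun x => 0 < x)%N w by apply: sub_all bw => x /andP[].
have tail : \sum_(wmax w <= a < M) (1 - q) * q ^+ a * s ^+ a.+1 * vweight 1 (rcons w a.+1)
    = (1 - q) * s * \sum_(wmax w <= a < M) a.+1%:R * (q * s) ^+ a.
  rewrite mulr_sumr; apply: eq_big_nat => a /andP[le_a _].
  by rewrite /= Vr1_rcons_gt // exprS exprMn; ring.
rewrite tail sum_dgeom_tail ?wmax_bounded // /dgeom_tail /= Vr1_wmax // expr1n.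
by field.
Qed.

End Recurrences.
End GeneratingFunction.

Section BinomialTransform.
Variable R : comPzRingType.

Definition bintr n (c : nat -> R) : R := \sum_(k < n.+1) 'C(n, k)%:R * (-1) ^+ k * c k.

Lemma eq_bintr n c c' : c =1 c' -> bintr n c = bintr n c'.
Proof. by move=> eq_c; apply: eq_bigr => k _; rewrite eq_c. Qed.

Lemma bintrB n c c' : bintr n (fun k => c k - c' k) = bintr n c - bintr n c'.
Proof. by rewrite -sumrB; apply: eq_bigr => k _; rewrite mulrBr. Qed.

Lemma bintrZ n x c : bintr n (fun k => x * c k) = x * bintr n c.
Proof. by rewrite mulr_sumr; apply: eq_bigr => k _; rewrite mulrCA. Qed.

Lemma bintr0 c : bintr 0 c = c 0%N.
Proof. by rewrite /bintr big_ord1 bin0 expr0 !mul1r. Qed.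

Lemma bintrS n c : bintr n.+1 c = bintr n c - bintr n (fun k => c k.+1).
Proof.
rewrite /bintr big_ord_recl.
under eq_bigr do rewrite binS natrD !mulrDl.
rewrite big_split /= addrA; congr (_ + _); last first.
  by rewrite -sumrN; apply: eq_bigr => i _; rewrite /bump /= add1n exprS; ring.
rewrite [in RHS]big_ord_recl big_ord_recr /= (bin_small (ltnSn n)) !bin0 !mul0r addr0.
by congr (_ + _); apply: eq_bigr => i _; rewrite /bump leq0n add1n.
Qed.

End BinomialTransform.

Section Kappa.
Variables (R : realType) (q : R).
Hypotheses (q_gt0 : 0 < q) (q_lt1 : q < 1).

(* At [k = 0] the formula would read [0 / 0] for [s = 1]; the true value is [1]. *)
Definition kappa0 k (s : R) : R := if k is 0 then 1 else (1 - s) / (1 - q ^+ k * s).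
Definition kappa1 k (s : R) : R := (q ^+ k - 1) * s / (1 - q ^+ k * s) ^+ 2.
Fixpoint kappa_step (prev : nat -> R -> R) k s : R :=
  if k is k'.+1 then kappa_step prev k' (q * s) - (1 - q) * s / (1 - q * s) * prev k' (q * s)
  else 0.
Fixpoint kappa r : nat -> R -> R :=
  match r with 0 => kappa0 | 1 => kappa1 | r'.+1 => kappa_step (kappa r') end.

Lemma kappaSS r k s :
  kappa r.+2 k.+1 s = kappa r.+2 k (q * s) - (1 - q) * s / (1 - q * s) * kappa r.+1 k (q * s).
Proof. by []. Qed.

Lemma qXs_lt1 k (s : R) : (0 < k)%N -> 0 <= s <= 1 -> q ^+ k * s < 1.
Proof.
move=> k_gt0 /andP[s_ge0 s_le1]; have qk_lt1 : q ^+ k < 1 by rewrite exprn_ilt1 ?ltW // -lt0n.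
by apply: le_lt_trans qk_lt1; rewrite ler_piMr // exprn_ge0 // ltW.
Qed.

Lemma subr_qXs_neq0 k (s : R) : (0 < k)%N -> 0 <= s <= 1 -> 1 - q ^+ k * s != 0.
Proof. by move=> k_gt0 s01; rewrite subr_eq0 eq_sym lt_eqF // qXs_lt1. Qed.

Lemma subr_qs_neq0 (s : R) : 0 <= s <= 1 -> 1 - q * s != 0.
Proof. by move=> s01; have := subr_qXs_neq0 (ltn0Sn 0) s01; rewrite expr1. Qed.

Lemma qs_in01 (s : R) : 0 <= s <= 1 -> 0 <= q * s <= 1.
Proof.
move=> /andP[s_ge0 s_le1]; rewrite mulr_ge0 ?(ltW q_gt0) //=.
by rewrite -[1](mulr1 1) ler_pM // ltW.
Qed.

Lemma kappa0S k (s : R) : 0 <= s <= 1 ->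
  kappa0 k.+1 s = (1 - s) / (1 - q * s) * kappa0 k (q * s).
Proof.
move=> s01; have qs1 := subr_qs_neq0 s01.
case: k => [|k] /=; first by rewrite expr1 mulr1.
have den := subr_qXs_neq0 (ltn0Sn k) (qs_in01 s01).
rewrite [q ^+ k.+2]exprSr -mulrA.
by field; rewrite qs1 den.
Qed.

Lemma kappa1S k (s : R) : 0 <= s <= 1 ->
  kappa1 k.+1 s = (1 - s) / (1 - q * s) * kappa1 k (q * s) -
                  (1 - q) * s / (1 - q * s) ^+ 2 * kappa0 k (q * s).
Proof.
move=> s01; have qs1 := subr_qs_neq0 s01.
case: k => [|k] /=.
  by rewrite /kappa1 !expr0 !expr1 subrr !mul0r mulr1; field.
have den := subr_qXs_neq0 (ltn0Sn k) (qs_in01 s01).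
rewrite /kappa1 [q ^+ k.+2]exprSr -mulrA.
by field; rewrite qs1 den.
Qed.

End Kappa.

Section BinomialTransformKappa.
Variables (R : realType) (q : R).
Hypotheses (q_gt0 : 0 < q) (q_lt1 : q < 1).
Variables (n : nat) (s : R).
Hypothesis s01 : 0 <= s <= 1.

Let qs1 : 1 - q * s != 0 := subr_qs_neq0 q_gt0 q_lt1 s01.

Lemma bintr_kappa0S :
  bintr n.+1 (fun k => kappa q 0 k s) =
  bintr n (fun k => kappa q 0 k s) - bintr n (fun k => kappa q 0 k (q * s)) +
  (1 - q) * s / (1 - q * s) * bintr n (fun k => kappa q 0 k (q * s)).
Proof.
rewrite bintrS (eq_bintr _ (fun k => kappa0S q_gt0 q_lt1 k s01)) bintrZ /=.
by field.
Qed.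

Lemma bintr_kappa1S :
  bintr n.+1 (fun k => kappa q 1 k s) =
  bintr n (fun k => kappa q 1 k s) - bintr n (fun k => kappa q 1 k (q * s)) +
  (1 - q) * s * ((1 - q * s) ^- 2 * bintr n (fun k => kappa q 0 k (q * s)) +
                 (1 - q * s)^-1 * bintr n (fun k => kappa q 1 k (q * s))).
Proof.
rewrite bintrS (eq_bintr _ (fun k => kappa1S q_gt0 q_lt1 k s01)) bintrB !bintrZ /=.
by field.
Qed.

Lemma bintr_kappaSS r :
  bintr n.+1 (fun k => kappa q r.+2 k s) =
  bintr n (fun k => kappa q r.+2 k s) - bintr n (fun k => kappa q r.+2 k (q * s)) +
  (1 - q) * s / (1 - q * s) * bintr n (fun k => kappa q r.+1 k (q * s)).
Proof. by rewrite bintrS (eq_bintr _ (fun k => kappaSS q r k s)) bintrB bintrZ; ring. Qed.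

End BinomialTransformKappa.

Section Limits.
Variable R : realType.
Local Open Scope classical_set_scope.

Lemma natmul_expr_le_inv (z : R) n : 0 <= z < 1 -> n%:R * z ^+ n <= (1 - z)^-1.
Proof.
move=> /andP[z_ge0 z_lt1]; have z1 : 0 < 1 - z by rewrite subr_gt0.
apply: (@le_trans _ _ (\sum_(i < n) z ^+ i)).
  have -> : n%:R * z ^+ n = \sum_(i < n) z ^+ n by rewrite sumr_const card_ord mulr_natl.
  apply: ler_sum => i _.
  by apply: ler_wiXn2l => //; [exact: ltW | exact: ltnW].
rewrite -[_^-1]mulr1 ler_pdivlMl // -opprB mulNr -subrX1 opprB.
by rewrite gerBl exprn_ge0.
Qed.

Lemma cvg_natmul_expr (y : R) : 0 <= y < 1 -> (fun n => n%:R * y ^+ n) @ \oo --> (0 : R^o).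
Proof.
move=> /andP[y_ge0 y_lt1]; set z := Num.sqrt y.
have z_ge0 : 0 <= z := sqrtr_ge0 y.
have z_lt1 : z < 1 by rewrite -sqrtr1 ltr_sqrt.
have zz : 0 <= z < 1 by rewrite z_ge0.
apply: (@squeeze_cvgr _ \oo _ _ (fun _ : nat => 0) (fun n => (1 - z)^-1 * z ^+ n)
  (fun n => n%:R * y ^+ n)).
- apply: filterE => n; rewrite mulr_ge0 ?exprn_ge0 //=.
  rewrite -(sqr_sqrtr y_ge0) -/z -exprM mulnC exprM expr2 mulrA.
  by rewrite ler_wpM2r ?exprn_ge0 // natmul_expr_le_inv.
- exact: (cvg_cst (0 : R^o)).
- by rewrite -(mulr0 (1 - z)^-1); apply: cvgMl_tmp; apply: cvg_expr; rewrite ger0_norm.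
Qed.

Lemma cvg_dgeom_tail (y : R) : 0 <= y < 1 -> dgeom_tail y @ \oo --> (0 : R^o).
Proof.
move=> y01; have /andP[y_ge0 y_lt1] := y01.
have -> : (0 : R^o) = 0 / (1 - y) ^+ 2 + 0 / (1 - y) by rewrite !mul0r addr0.
apply: cvgD; apply: cvgMr_tmp; last exact: cvg_natmul_expr.
by apply: cvg_expr; rewrite ger0_norm.
Qed.

Lemma cvg_recurrence_rhs (u v x t y : nat -> R) (a b c d k : R) :
  u @ \oo --> (a : R^o) -> v @ \oo --> (b : R^o) -> x @ \oo --> (c : R^o) ->
  t @ \oo --> (0 : R^o) -> y @ \oo --> (d : R^o) ->
  (fun M => u M - v M + k * (x M - t M * y M)) @ \oo --> (a - b + k * c : R^o).
Proof.
move=> ua vb xc t0 yd; rewrite -[c](subr0 c) -(mul0r d).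
by apply: cvgD; [exact: cvgB | apply: cvgMl_tmp; apply: cvgB => //; exact: cvgM].
Qed.

End Limits.

Section Convergence.
Variables (R : realType) (q : R).
Hypotheses (q_gt0 : 0 < q) (q_lt1 : q < 1).
Local Open Scope classical_set_scope.

Lemma genK0 M r s : genK q 0 M r s = kappa q r 0 s.
Proof.
rewrite /genK wexp0 /wmax big_nil expr0 mulr1.
by case: r => [|[|r]] //=; rewrite /kappa1 expr0 subrr !mul0r.
Qed.

Lemma genK_cvg n : forall r (s : R), 0 <= s <= 1 ->
  (fun M => genK q n M r s) @ \oo --> (bintr n (fun k => kappa q r k s) : R^o).
Proof.
elim: n => [|n IH] r s s01.
  by rewrite bintr0; under eq_fun do rewrite genK0; exact: (cvg_cst (_ : R^o)).
have qs01 := qs_in01 q_gt0 q_lt1 s01.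
have := qXs_lt1 q_gt0 q_lt1 (ltn0Sn 0) s01; rewrite expr1 => qs_lt1.
have qs_neq1 : q * s != 1 by rewrite lt_eqF.
have cvg_qsX : (fun M => (q * s) ^+ M) @ \oo --> (0 : R^o).
  by apply: cvg_expr; rewrite ger0_norm //; case/andP: qs01.
have one01 : 0 <= (1 : R) <= 1 by rewrite ler01 lexx.
case: r => [|[|r]].
- under eq_fun do rewrite genK_rec0 //.
  rewrite bintr_kappa0S //.
  exact: cvg_recurrence_rhs (IH _ _ s01) (IH _ _ qs01) (IH _ _ qs01) cvg_qsX (IH _ _ one01).
- under eq_fun do rewrite genK_rec1 //.
  rewrite bintr_kappa1S //.
  apply: cvg_recurrence_rhs (IH _ _ s01) (IH _ _ qs01) _ _ (IH 0%N _ one01).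
    by apply: cvgD; apply: cvgMl_tmp; exact: IH.
  by apply: cvg_dgeom_tail; case/andP: qs01 => -> _.
- under eq_fun do rewrite genK_recSS //.
  rewrite bintr_kappaSS //.
  exact: cvg_recurrence_rhs (IH _ _ s01) (IH _ _ qs01) (IH _ _ qs01) cvg_qsX (IH _ _ one01).
Qed.

End Convergence.

Section SubsetsOfOrdinals.
Variable k : nat.

Definition cons_set (b : bool) (U : {set 'I_k}) : {set 'I_k.+1} :=
  (if b then [set ord0] else finset.set0) :|: [set lift ord0 u | u in U].

Lemma ord0_notin_lift (U : {set 'I_k}) : (ord0 \in [set lift ord0 u | u in U]) = false.
Proof. by apply/imsetP => -[u _ /eqP]; rewrite (negbTE (neq_lift ord0 u)). Qed.

Lemma lift_in_cons_set b (U : {set 'I_k}) u : (lift ord0 u \in cons_set b U) = (u \in U).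
Proof.
rewrite finset.in_setU mem_imset; last exact: lift_inj.
by case: b; rewrite ?inE // eq_sym (negbTE (neq_lift ord0 u)).
Qed.

Lemma ord0_in_cons_set b (U : {set 'I_k}) : (ord0 \in cons_set b U) = b.
Proof. by rewrite finset.in_setU ord0_notin_lift orbF; case: b; rewrite inE ?eqxx. Qed.

Lemma big_set_ord_recl (V : nmodType) (F : {set 'I_k.+1} -> V) :
  \sum_(T : {set 'I_k.+1}) F T = \sum_(b : bool) \sum_(U : {set 'I_k}) F (cons_set b U).
Proof.
rewrite pair_big /= (reindex (fun p => cons_set p.1 p.2)) //=.
exists (fun T : {set 'I_k.+1} => (ord0 \in T, [set u : 'I_k | lift ord0 u \in T])).
  move=> [b U] _; rewrite ord0_in_cons_set; congr pair.
  by apply/setP => u; rewrite inE lift_in_cons_set.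
move=> T _; apply/setP => t; case: (unliftP ord0 t) => [u ->|->].
  by rewrite lift_in_cons_set inE.
by rewrite ord0_in_cons_set.
Qed.

Lemma card_cons_set b (U : {set 'I_k}) : #|cons_set b U| = (b + #|U|)%N.
Proof.
rewrite cardsU (card_imset _ (@lift_inj _ ord0)).
rewrite (_ : _ :&: _ = finset.set0) ?cards0 ?subn0; last first.
  apply/setP => t; rewrite !inE; case: b; rewrite ?inE //.
  by case: eqP => // ->; rewrite ord0_notin_lift.
by case: b; rewrite ?cards1 ?cards0.
Qed.

End SubsetsOfOrdinals.

Lemma big_cons_set (T : Type) (idx : T) (op : Monoid.com_law idx) k b (U : {set 'I_k})
    (F : 'I_k.+1 -> T) :
  \big[op/idx]_(t in cons_set b U) F t =
  op (if b then F ord0 else idx) (\big[op/idx]_(u in U) F (lift ord0 u)).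
Proof.
have lift_inj_on : {in U &, injective (lift ord0)} by move=> x y _ _; apply: lift_inj.
rewrite /cons_set; case: b.
  by rewrite big_setU1 ?ord0_notin_lift //= big_imset.
by rewrite finset.set0U big_imset // Monoid.mul1m.
Qed.

Lemma bigmax_succ k (U : {set 'I_k}) (f : 'I_k -> nat) :
  maxn 1 (\max_(u in U) (f u).+1) = (\max_(u in U) f u).+1.
Proof.
apply: (big_rec2 (fun y1 y2 => maxn 1 y1 = y2.+1)) => // i y1 y2 _ IH.
by rewrite maxnCA IH maxnSS.
Qed.

Lemma bigmax_succ_neq0 k (U : {set 'I_k}) (f : 'I_k -> nat) : U != finset.set0 ->
  \max_(u in U) (f u).+1 = (\max_(u in U) f u).+1.
Proof.
case/set0Pn => u uU; rewrite -bigmax_succ; apply/esym/maxn_idPr.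
exact: leq_trans (leq_bigmax_cond _ uU).
Qed.

Section ClosedForm.
Variables (R : realType) (q : R).
Hypotheses (q_gt0 : 0 < q) (q_lt1 : q < 1).

(* [phi] with [1 / (Q ^ l - 1) = q ^ l / (1 - q ^ l)] deformed to [q ^ l / (1 - q ^ l * s)]. *)
Definition phis r k (s : R) : R :=
  \sum_(S : {set 'I_k} | (#|S| == r.-1)%N && ((0%N : nat) \notin [seq val l | l in S]))
     (\prod_(l in S) (q ^+ val l / (1 - q ^+ val l * s))) *
     (q ^+ (\max_(l in S) val l) - q ^+ k).

(* [phis (j + 1) (k + 1)] reindexed by [l = t + 1], which removes the condition [l != 0]. *)
Definition psi j k (s : R) : R :=
  \sum_(T : {set 'I_k} | #|T| == j)
     (\prod_(t in T) (q ^+ (val t).+1 / (1 - q ^+ (val t).+1 * s))) *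
     (q ^+ (\max_(t in T) (val t).+1) - q ^+ k.+1).

Lemma zero_in_val_set k (S : {set 'I_k.+1}) :
  ((0%N : nat) \in [seq val l | l in S]) = (ord0 \in S).
Proof.
apply/mapP/idP => [[l]|ord0_S]; last by exists ord0; rewrite ?mem_enum.
by rewrite mem_enum => l_S /esym l0; rewrite (_ : ord0 = l) //; apply/val_inj.
Qed.

Lemma phis_psi r k s : phis r k.+1 s = psi r.-1 k s.
Proof.
rewrite /phis /psi big_mkcond big_set_ord_recl big_bool /=.
rewrite big1 ?add0r; last by move=> U _; rewrite zero_in_val_set ord0_in_cons_set andbF.
rewrite [RHS]big_mkcond; apply: eq_bigr => U _.
rewrite zero_in_val_set ord0_in_cons_set card_cons_set andbT.
by case: eqP => // _; rewrite !big_cons_set /= mul1r max0n.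
Qed.

Lemma psiS j k s : (0 < j)%N ->
  psi j k.+1 s = q ^+ j.+1 * psi j k (q * s) + q ^+ j.+1 / (1 - q * s) * psi j.-1 k (q * s).
Proof.
case: j => // j _; rewrite /psi big_mkcond big_set_ord_recl big_bool /= addrC.
have shift u : q ^+ u.+2 / (1 - q ^+ u.+2 * s) = q * (q ^+ u.+1 / (1 - q ^+ u.+1 * (q * s))).
  by rewrite [q ^+ u.+1 * (q * s)]mulrA -exprSr mulrA -exprS.
rewrite !mulr_sumr [in RHS]big_mkcond [X in _ = _ + X]big_mkcond; congr (_ + _).
  apply: eq_bigr => U _; rewrite card_cons_set add0n.
  case: eqP => // cardU.
  rewrite !big_cons_set /= !Monoid.mul1m.
  under eq_bigr do rewrite shift.
  rewrite big_split /= prodr_const cardU bigmax_succ_neq0; last first.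
    by apply/eqP => U0; move: cardU; rewrite U0 cards0.
  by rewrite !exprS; ring.
apply: eq_bigr => U _; rewrite card_cons_set add1n eqSS.
case: eqP => // cardU.
rewrite !big_cons_set /=.
under eq_bigr do rewrite shift.
rewrite big_split /= prodr_const cardU bigmax_succ !exprS expr0 !mulr1.
by ring.
Qed.

Lemma phis0 r s : phis r 0 s = 0.
Proof.
rewrite /phis big1 // => S _.
have -> : \max_(l in S) val l = 0%N by apply/eqP; rewrite -leqn0; apply/bigmax_leqP => -[].
by rewrite subrr mulr0.
Qed.

Lemma psi0 k s : psi 0 k s = 1 - q ^+ k.+1.
Proof.
rewrite /psi (big_pred1 finset.set0); last by move=> T; rewrite /= cards_eq0.
by rewrite !finset.big_set0 expr0 mul1r.
Qed.

Lemma psi_ord0 j s : (0 < j)%N -> psi j 0 s = 0.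
Proof.
move=> j_gt0; rewrite /psi big_pred0 // => T /=.
by have := max_card T; rewrite card_ord leqn0 => /eqP ->; case: j j_gt0.
Qed.

Lemma phis1 k s : phis 1 k s = 1 - q ^+ k.
Proof. by case: k => [|k]; rewrite ?phis0 ?expr0 ?subrr // phis_psi psi0. Qed.

Lemma phisSS r k s :
  phis r.+2 k.+1 s = q ^+ r.+2 * phis r.+2 k (q * s) + q ^+ r.+2 / (1 - q * s) * phis r.+1 k (q * s).
Proof.
case: k => [|k]; first by rewrite !phis0 phis_psi psi_ord0 // !mulr0 addr0.
by rewrite !phis_psi psiS.
Qed.

Lemma phis_phi r k : phis r k 1 = phi q r k.
Proof.
apply: eq_bigr => S _; congr (_ * _); apply: eq_bigr => l _.
rewrite mulr1; have [->|l_neq0] := eqVneq (val l) 0%N; first by rewrite !expr0 subrr.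
have l_gt0 : (0 < val l)%N by rewrite lt0n.
have one01 : 0 <= (1 : R) <= 1 by rewrite ler01 lexx.
have := subr_qXs_neq0 q_gt0 q_lt1 l_gt0 one01; rewrite mulr1 => den.
have qX_neq0 : q ^+ l != 0 by rewrite expf_neq0 // gt_eqF.
by rewrite exprVn; field; rewrite qX_neq0 mulN1r.
Qed.

Lemma kappa_small r k s : (0 < r)%N -> (k < r)%N -> kappa q r k s = 0.
Proof.
elim: r k s => [//|r IHr] k s _ lt_kr.
case: r IHr lt_kr => [|r] IHr lt_kr.
  by case: k lt_kr => // _; rewrite /= /kappa1 expr0 subrr !mul0r.
elim: k s lt_kr => [//|k IHk] s lt_kr.
by rewrite kappaSS IHk ?(ltnW lt_kr) // IHr // mulr0 subr0.
Qed.

Lemma kappa_closed r k s : (0 < r)%N -> 0 <= s <= 1 ->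
  kappa q r k s = (-1) ^+ r * ((1 - q) / q) ^+ r.-1 * s ^+ r / (1 - q ^+ k * s) ^+ 2 * phis r k s.
Proof.
elim: r k s => [//|r IHr] k s _ s01.
case: r IHr => [|r] IHr.
  rewrite /= /kappa1 phis1; case: k => [|k]; first by rewrite expr0 subrr !mul0r mulr0.
  have := subr_qXs_neq0 q_gt0 q_lt1 (ltn0Sn k) s01.
  by set d := 1 - _ => d_neq0; rewrite expr1 expr0; field.
elim: k s s01 => [|k IHk] s s01; first by rewrite phis0 mulr0.
have qs01 := qs_in01 q_gt0 q_lt1 s01.
rewrite kappaSS IHk // IHr // phisSS [q ^+ k.+1]exprSr -mulrA.
have d1 := subr_qs_neq0 q_gt0 q_lt1 s01.
have d2 : 1 - q ^+ k * (q * s) != 0.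
  by case: k IHk => [|k] _; [rewrite expr0 mul1r | exact: subr_qXs_neq0].
have q_neq0 : q != 0 by rewrite gt_eqF.
rewrite /= !exprS !exprMn; field.
by rewrite -[q ^+ k * q * s]mulrA d1 d2 q_neq0.
Qed.

End ClosedForm.

Section Expectation.
Variables (R : realType) (q : R).
Hypotheses (q_gt0 : 0 < q) (q_lt1 : q < 1).
Local Open Scope classical_set_scope.

Lemma Etrunc_genK r n M : (0 < r)%N -> Etrunc q r n M = genK q n M r 1.
Proof.
by case: r => // r _; apply: eq_bigr => f _; rewrite expr1n mulr1.
Qed.

Lemma Etrunc_cvg r n : (0 < r)%N -> (r <= n)%N ->
  (fun M => Etrunc q r n M) @ \oo -->
  ((-1) ^+ r * ((1 - q) / q) ^+ r.-1 *
    \sum_(r <= k < n.+1) ('C(n, k)%:R * (-1) ^+ k * phi q r k / (1 - q ^+ k) ^+ 2) : R^o).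
Proof.
move=> r_gt0 le_rn; have one01 : 0 <= (1 : R) <= 1 by rewrite ler01 lexx.
under eq_fun do rewrite Etrunc_genK //.
suff -> : (-1) ^+ r * ((1 - q) / q) ^+ r.-1 *
    \sum_(r <= k < n.+1) ('C(n, k)%:R * (-1) ^+ k * phi q r k / (1 - q ^+ k) ^+ 2) =
  bintr n (fun k => kappa q r k 1) by exact: genK_cvg.
pose F k := 'C(n, k)%:R * (-1) ^+ k * kappa q r k 1.
rewrite /bintr -(big_mkord (fun _ => true) F) (big_cat_nat (leq0n r) (leqW le_rn)) /= {}/F.
rewrite [X in _ = X + _]big_nat_cond [X in _ = X + _]big1 ?add0r; last first.
  by move=> k /andP[/andP[_ lt_kr] _]; rewrite kappa_small // mulr0.
rewrite mulr_sumr; apply: eq_big_nat => k _.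
by rewrite kappa_closed // phis_phi // expr1n !mulr1; ring.
Qed.

End Expectation.

Local Open Scope classical_set_scope.

Theorem mainTheorem2 (R : realType) (q : R) (r n : nat) :
  0 < q -> q < 1 -> (1 <= r)%N -> (r <= n)%N ->
  (fun M => Etrunc q r n M) @ \oo -->
     ((-1) ^+ r * ((1 - q) / q) ^+ r.-1 *
      \sum_(r <= k < n.+1)
        ('C(n, k)%:R * (-1) ^+ k * phi q r k / (1 - q ^+ k) ^+ 2))
  /\
  (fun M => Etrunc q 1 n M) @ \oo -->
     (\sum_(1 <= k < n.+1) ('C(n, k)%:R * (-1) ^+ k.-1 / (1 - q ^+ k))).
Proof.
move=> q_gt0 q_lt1 r_gt0 le_rn; split; first exact: Etrunc_cvg.
suff <- : (-1) ^+ 1 * ((1 - q) / q) ^+ 0 *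
    \sum_(1 <= k < n.+1) ('C(n, k)%:R * (-1) ^+ k * phi q 1 k / (1 - q ^+ k) ^+ 2) =
  \sum_(1 <= k < n.+1) ('C(n, k)%:R * (-1) ^+ k.-1 / (1 - q ^+ k)).
  exact: Etrunc_cvg (leq_trans r_gt0 le_rn).
rewrite mulr_sumr; apply: eq_big_nat => -[//|k] _.
have one01 : 0 <= (1 : R) <= 1 by rewrite ler01 lexx.
have den := subr_qXs_neq0 q_gt0 q_lt1 (ltn0Sn k) one01; rewrite mulr1 in den.
rewrite -phis_phi // phis1 [(-1) ^+ k.+1]exprS.
by field; rewrite den gt_eqF.
Qed.
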